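(* Assume $J$ satisfies (J1), (J2), (J3), (J4) and $h$ satisfies (h1), (h2). For $\ell\in\mathbb N$ let $\psi^{(\ell)}$ be the configuration with $\psi^{(\ell)}_i=-1$ for $i\in Q_\ell$ and $\psi^{(\ell)}_i=1$ for $i\in\mathbb Z^d\setminus Q_\ell$. Then there is a constant $C\ge1$, depending only on $d$, $\mu$ and $\tau$, such that for every $\ell\in\mathbb N$ $$H_{Q_\ell}(\psi^{(\ell)})\le C\,\ell^{d-1}\Big(1+\sum_{m=1}^{\ell+1}\sigma(m)\Big).$$
   Context: Fix $d\ge2$, $|x|:=\sum_n|x_n|$, $|x|_\infty:=\max_n|x_n|$. Configurations are maps $u:\mathbb Z^d\to\{-1,1\}$. Given $J:\mathbb Z^d\times\mathbb Z^d\to[0,\infty)$ and $h:\mathbb Z^d\to\mathbb R$, for finite $\Gamma$: $H_\Gamma(u):=\sum_{(i,j)\in\mathbb Z^{2d}\setminus(\mathbb Z^d\setminus\Gamma)^2}J_{ij}(1-u_iu_j)+\sum_{i\in\Gamma}h_iu_i$. $Q_\ell:=\{i\in\mathbb Z^d:|i|_\infty\le\ell\}$. Conditions (constants $\Lambda\ge\lambda>0$, $\mu>0$, $\tau\in\mathbb N$): (J1) $J_{ij}=J_{ji}$; (J2) $J_{ii}=0$; (J3) $J_{ij}\ge\lambda$ if $|i-j|=1$; (J4) $\sum_jJ_{ij}\le\Lambda$ for all $i$; (h1) $\sup_i|h_i|\le\mu$; (h2) $\sum_{i\in F}h_i=0$ for every fundamental domain $F$ (set of representatives) of $\mathbb Z^d/\tau\mathbb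 Z^d$. For $R\in\mathbb N$, $\sigma(R):=\sup_{i\in\mathbb Z^d}\sum_{j:\,|j-i|_\infty\ge R}J_{ij}$. *)

From Stdlib Require Import Reals Lra ZArith List ClassicalEpsilon.
Import ListNotations.
Open Scope R_scope.

Definition Pt := list Z.
Definition is_pt (d : nat) (x : Pt) : Prop := length x = d.

Definition vsub (x y : Pt) : Pt := map (fun p => (fst p - snd p)%Z) (combine x y).

Definition norm1 (x : Pt) : Z := fold_right (fun a s => (Z.abs a + s)%Z) 0%Z x.
Definition norminf (x : Pt) : Z := fold_right (fun a m => Z.max (Z.abs a) m) 0%Z x.

Definition inQ (l : nat) (x : Pt) : Prop := (norminf x <= Z.of_nat l)%Z.

Fixpoint cube (d l : nat) : list Pt :=
  match d with
  | O => [ [] ]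
  | S d' => flat_map (fun z => map (cons z) (cube d' l))
              (map (fun k => (Z.of_nat k - Z.of_nat l)%Z) (seq 0 (2 * l + 1)))
  end.

Definition lsum {A : Type} (f : A -> R) (L : list A) : R :=
  fold_right (fun x s => f x + s) 0 L.

(* supremum of a bounded nonempty set of reals (0 by convention otherwise) *)
Definition sup_R (A : R -> Prop) : R :=
  match excluded_middle_informative (bound A /\ exists x, A x) with
  | left H => proj1_sig (completeness A (proj1 H) (proj2 H))
  | right _ => 0
  end.

(* sum of a (nonnegative) family f over the (countable) set P:
   supremum of all finite partial sums *)
Definition nnsum {A : Type} (P : A -> Prop) (f : A -> R) : R :=
  sup_R (fun s => exists L : list A, NoDup L /\ Forall P L /\ s = lsum f L).

Definition Ham (d : nat) (J : Pt -> Pt -> R) (h : Pt -> R)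
    (G : list Pt) (u : Pt -> R) : R :=
  nnsum (fun p : Pt * Pt => is_pt d (fst p) /\ is_pt d (snd p) /\
                             (In (fst p) G \/ In (snd p) G))
        (fun p => J (fst p) (snd p) * (1 - u (fst p) * u (snd p)))
  + lsum (fun i => h i * u i) G.

Definition sigmaJ (d : nat) (J : Pt -> Pt -> R) (Rr : nat) : R :=
  sup_R (fun s => exists i, is_pt d i /\
           s = nnsum (fun j => is_pt d j /\ (Z.of_nat Rr <= norminf (vsub j i))%Z) (J i)).

Definition psi (l : nat) (x : Pt) : R :=
  if Z.leb (norminf x) (Z.of_nat l) then -1 else 1.

Definition congr_mod (tau : nat) (x y : Pt) : Prop :=
  Forall2 (fun a b => (Z.of_nat tau | a - b)%Z) x y.

Definition fund_domain (d tau : nat) (F : list Pt) : Prop :=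
  NoDup F /\ Forall (is_pt d) F /\
  forall x, is_pt d x -> exists! y, In y F /\ congr_mod tau x y.

Definition J_cond (d : nat) (lam Lam : R) (J : Pt -> Pt -> R) : Prop :=
  (forall i j, is_pt d i -> is_pt d j -> 0 <= J i j) /\
  (forall i j, is_pt d i -> is_pt d j -> J i j = J j i) /\
  (forall i, is_pt d i -> J i i = 0) /\
  (forall i j, is_pt d i -> is_pt d j -> norm1 (vsub i j) = 1%Z -> lam <= J i j) /\
  (* J4: sum_j J_ij <= Lam, i.e. every finite partial sum is <= Lam *)
  (forall i, is_pt d i -> forall L, NoDup L -> Forall (is_pt d) L -> lsum (J i) L <= Lam).

Definition h_cond (d : nat) (mu : R) (tau : nat) (h : Pt -> R) : Prop :=
  (forall i, is_pt d i -> Rabs (h i) <= mu) /\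
  (forall F, fund_domain d tau F -> lsum h F = 0).

From Stdlib Require Import Reals ZArith List Lia Lra Bool Permutation ClassicalEpsilon.
Import ListNotations.
Open Scope R_scope.

(* Since psi is -1 on Q_l and 1 outside, only pairs (i, j) with exactly one end in Q_l carry
   interaction energy, 2 J_ij for each of the two orientations.  For i in Q_l and j outside,
   |j - i|_inf >= l + 1 - |i|_inf, so the interaction energy is at most
   4 sum_{i in Q_l} sigma(l + 1 - |i|_inf).  Bounding each term by the sum over the coordinates
   z of i of sigma(l + 1 - |z|) gives d (2l+1)^(d-1) times a one-dimensional tent sum, which is
   at most 2 (sigma(1) + ... + sigma(l+1)).
   The field energy is - sum_{Q_l} h.  Cut each side of the cube into intervals of length tau
   and a remainder: by (h2) every product of whole periods sums to zero, and what is left is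
   covered by d slabs of at most tau (2l+1)^(d-1) sites, so |sum_{Q_l} h| <= d mu tau (2l+1)^(d-1). *)

Section FiniteSums.
Variable A : Type.
Implicit Types (f g : A -> R) (L : list A).

Lemma lsum_app f L1 L2 : lsum f (L1 ++ L2) = lsum f L1 + lsum f L2.
Proof. induction L1 as [|a L1 IH]; simpl; [lra|]. rewrite IH; lra. Qed.

Lemma lsum_ext_in f g L : (forall x, In x L -> f x = g x) -> lsum f L = lsum g L.
Proof. induction L as [|a L IH]; simpl; intros H; [reflexivity|]. rewrite H, IH; auto. Qed.

Lemma lsum_le_in f g L : (forall x, In x L -> f x <= g x) -> lsum f L <= lsum g L.
Proof.
  induction L as [|a L IH]; simpl; intros H; [lra|].
  pose proof (H a (or_introl eq_refl)); pose proof (IH (fun x h => H x (or_intror h))); lra.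
Qed.

Lemma lsum_const c L : lsum (fun _ => c) L = INR (length L) * c.
Proof. induction L as [|a L IH]; simpl length; [simpl; lra|]. rewrite S_INR; simpl; lra. Qed.

Lemma lsum_nonneg f L : (forall x, In x L -> 0 <= f x) -> 0 <= lsum f L.
Proof. intros H. apply (lsum_le_in (fun _ => 0)) in H. rewrite lsum_const in H; lra. Qed.

Lemma lsum_plus f g L : lsum (fun x => f x + g x) L = lsum f L + lsum g L.
Proof. induction L as [|a L IH]; simpl; [lra|]. rewrite IH; lra. Qed.

Lemma lsum_scal c f L : lsum (fun x => c * f x) L = c * lsum f L.
Proof. induction L as [|a L IH]; simpl; [lra|]. rewrite IH; lra. Qed.

Lemma lsum_perm f L1 L2 : Permutation L1 L2 -> lsum f L1 = lsum f L2.
Proof. induction 1; simpl; lra. Qed.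

Lemma lsum_filter f (b : A -> bool) L :
  lsum f (filter b L) = lsum (fun x => if b x then f x else 0) L.
Proof. induction L as [|a L IH]; simpl; [reflexivity|]. destruct (b a); simpl; lra. Qed.

Lemma lsum_elem_le f L x : (forall y, In y L -> 0 <= f y) -> In x L -> f x <= lsum f L.
Proof.
  induction L as [|a L IH]; simpl; intros H Hx; [contradiction|].
  pose proof (lsum_nonneg f L (fun y h => H y (or_intror h))).
  pose proof (H a (or_introl eq_refl)).
  destruct Hx as [<-|Hx]; [lra|]. pose proof (IH (fun y h => H y (or_intror h)) Hx); lra.
Qed.

Lemma Rabs_lsum_le f L M : (forall x, In x L -> Rabs (f x) <= M) ->
  Rabs (lsum f L) <= INR (length L) * M.
Proof.
  intros H. eapply Rle_trans; [|rewrite <- lsum_const; apply (lsum_le_in _ _ _ H)].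
  clear H. induction L as [|a L IH]; simpl; [rewrite Rabs_R0; lra|].
  pose proof (Rabs_triang (f a) (lsum f L)); lra.
Qed.

End FiniteSums.

Lemma lsum_map {A B} (f : B -> R) (g : A -> B) L : lsum f (map g L) = lsum (fun x => f (g x)) L.
Proof. induction L as [|a L IH]; simpl; [lra|]. rewrite IH; lra. Qed.

Lemma lsum_flat_map {A B} (f : B -> R) (g : A -> list B) L :
  lsum f (flat_map g L) = lsum (fun x => lsum f (g x)) L.
Proof. induction L as [|a L IH]; simpl; [lra|]. rewrite lsum_app, IH; lra. Qed.

Lemma lsum_fibers {A B} (eq_dec : forall x y : A, {x = y} + {x <> y})
    (g : A * B -> R) (G : list A) (L : list (A * B)) :
  NoDup G -> (forall p, In p L -> ~ In (fst p) G -> g p = 0) ->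
  lsum g L = lsum (fun i => lsum g (filter (fun p => if eq_dec (fst p) i then true else false) L)) G.
Proof.
  intros HG. induction L as [|a L IH]; intros Hout.
  - simpl. rewrite lsum_const; lra.
  - simpl filter. rewrite (lsum_ext_in _ _
      (fun i => (if eq_dec (fst a) i then g a else 0) +
                lsum g (filter (fun p => if eq_dec (fst p) i then true else false) L))).
    2: { intros i _. destruct (eq_dec (fst a) i); simpl; lra. }
    rewrite lsum_plus, <- IH by (intros; apply Hout; simpl; auto). simpl. f_equal.
    clear IH. destruct (in_dec eq_dec (fst a) G) as [Hin|Hnin].
    + clear Hout. induction HG as [|x G Hx HG IHG]; [contradiction|]. simpl.
      destruct (eq_dec (fst a) x) as [E|Hne].
      * rewrite (lsum_ext_in _ _ (fun _ => 0) G), lsum_const; [lra|].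
        intros y Hy. destruct (eq_dec (fst a) y); congruence.
      * destruct Hin as [Hin|Hin]; [congruence|]. rewrite <- (IHG Hin); lra.
    + rewrite (lsum_ext_in _ _ (fun _ => 0)), lsum_const, Hout; simpl; auto; [lra|].
      intros y Hy. destruct (eq_dec (fst a) y); congruence.
Qed.

Lemma sum_f_R0_lsum (g : nat -> R) n : sum_f_R0 g n = lsum g (seq 0 (S n)).
Proof. induction n; [simpl; lra|]. simpl sum_f_R0. rewrite IHn, (seq_S (S n)), lsum_app. simpl; lra. Qed.

Lemma map_sub_seq n : map (fun k => n - 1 - k)%nat (seq 0 n) = rev (seq 0 n).
Proof.
  induction n as [|n IH]; [reflexivity|].
  transitivity (n :: map (fun k => n - 1 - k)%nat (seq 0 n)).
  - simpl. rewrite <- seq_shift, map_map. f_equal; [lia|]. apply map_ext; intros; lia.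
  - rewrite IH, seq_S, rev_app_distr. reflexivity.
Qed.

Lemma lsum_seq_rev (g : nat -> R) n :
  lsum (fun k => g (n - 1 - k)%nat) (seq 0 n) = lsum g (seq 0 n).
Proof.
  rewrite <- lsum_map, map_sub_seq. apply lsum_perm, Permutation_sym, Permutation_rev.
Qed.

Lemma sup_R_ub (S : R -> Prop) x : bound S -> S x -> x <= sup_R S.
Proof.
  intros Hb Hx. unfold sup_R. destruct excluded_middle_informative as [H|H].
  - apply (proj1 (proj2_sig (completeness S (proj1 H) (proj2 H)))); auto.
  - exfalso; eauto.
Qed.

Lemma sup_R_least (S : R -> Prop) B : 0 <= B -> (forall x, S x -> x <= B) -> sup_R S <= B.
Proof.
  intros H0 HB. unfold sup_R. destruct excluded_middle_informative as [H|H]; auto.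
  apply (proj2 (proj2_sig (completeness S (proj1 H) (proj2 H)))). exact HB.
Qed.

Definition zinterval (c : Z) (n : nat) : list Z := map (fun k => (c + Z.of_nat k)%Z) (seq 0 n).

Lemma zinterval_S c n : zinterval c (S n) = c :: zinterval (c + 1) n.
Proof.
  unfold zinterval. simpl. rewrite <- seq_shift, map_map. f_equal; [lia|].
  apply map_ext; intros; lia.
Qed.

Lemma zinterval_add c a b : zinterval c (a + b) = zinterval c a ++ zinterval (c + Z.of_nat a) b.
Proof.
  revert c; induction a as [|a IH]; intros c; [simpl; rewrite Z.add_0_r; reflexivity|].
  rewrite Nat.add_succ_l, !zinterval_S, IH. simpl. do 3 f_equal. lia.
Qed.

Lemma In_zinterval z c n : In z (zinterval c n) <-> (c <= z < c + Z.of_nat n)%Z.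
Proof.
  unfold zinterval. rewrite in_map_iff. split.
  - intros [k [<- Hk]]. apply in_seq in Hk. lia.
  - intros H. exists (Z.to_nat (z - c)). split; [lia|]. apply in_seq. lia.
Qed.

Lemma NoDup_zinterval c n : NoDup (zinterval c n).
Proof. apply NoDup_map_NoDup_ForallPairs; [intros x y _ _ E; lia | apply seq_NoDup]. Qed.

Lemma length_zinterval c n : length (zinterval c n) = n.
Proof. unfold zinterval. rewrite length_map, length_seq. reflexivity. Qed.

Fixpoint box (ivs : list (Z * nat)) : list Pt :=
  match ivs with
  | [] => [ [] ]
  | (c, n) :: ivs' => flat_map (fun z => map (cons z) (box ivs')) (zinterval c n)
  end.

Lemma cube_box d l : cube d l = box (repeat ((- Z.of_nat l)%Z, (2 * l + 1)%nat) d).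
Proof.
  induction d as [|d IH]; [reflexivity|]. simpl. rewrite IH. f_equal.
  unfold zinterval. apply map_ext. intros; lia.
Qed.

Lemma In_box x ivs :
  In x (box ivs) <-> Forall2 (fun z cn => In z (zinterval (fst cn) (snd cn))) x ivs.
Proof.
  revert x; induction ivs as [|[c n] ivs IH]; intros x; simpl.
  - split; [intros [<-|[]]; constructor | intros H; inversion H; auto].
  - rewrite in_flat_map. split.
    + intros [z [Hz Hx]]. apply in_map_iff in Hx. destruct Hx as [y [<- Hy]].
      constructor; auto. apply IH; auto.
    + intros H; inversion H; subst. eexists; split; eauto. apply in_map, IH; auto.
Qed.

Lemma length_In_box x ivs : In x (box ivs) -> length x = length ivs.
Proof. intros H. apply In_box, Forall2_length in H. exact H. Qed.

Lemma length_box ivs : length (box ivs) = fold_right Nat.mul 1%nat (map snd ivs).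
Proof.
  induction ivs as [|[c n] ivs IH]; [reflexivity|]. simpl. rewrite <- IH.
  rewrite <- (length_zinterval c n) at 2. generalize (zinterval c n) as L. intros L.
  induction L as [|z L IHL]; simpl; [reflexivity|].
  rewrite length_app, length_map. f_equal. apply IHL.
Qed.

Lemma NoDup_box ivs : NoDup (box ivs).
Proof.
  induction ivs as [|[c n] ivs IH]; simpl; [constructor; [simpl; tauto | constructor]|].
  pose proof (NoDup_zinterval c n) as Hz. induction Hz as [|z L Hz _ IHL]; simpl; [constructor|].
  apply NoDup_app; auto.
  - apply NoDup_map_NoDup_ForallPairs; auto. intros x y _ _ E. congruence.
  - intros x Hx Hx'. apply in_map_iff in Hx as [y [<- _]].
    apply in_flat_map in Hx' as [w [Hw Hy]]. apply in_map_iff in Hy as [v [E _]].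
    injection E as ->. contradiction.
Qed.

Lemma lsum_box_cons (f : Pt -> R) c n ivs :
  lsum f (box ((c, n) :: ivs)) = lsum (fun z => lsum (fun x => f (z :: x)) (box ivs)) (zinterval c n).
Proof. simpl. rewrite lsum_flat_map. apply lsum_ext_in. intros. apply lsum_map. Qed.

Lemma lsum_box_split (f : Pt -> R) ivs1 c a b ivs2 :
  lsum f (box (ivs1 ++ (c, a + b)%nat :: ivs2)) =
  lsum f (box (ivs1 ++ (c, a) :: ivs2)) + lsum f (box (ivs1 ++ (c + Z.of_nat a, b)%Z :: ivs2)).
Proof.
  revert f; induction ivs1 as [|[c' n'] ivs1 IH]; intros f; simpl app.
  - rewrite !lsum_box_cons, zinterval_add, lsum_app. reflexivity.
  - rewrite !lsum_box_cons, <- lsum_plus. apply lsum_ext_in. intros. apply IH.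
Qed.

Lemma lsum_box_empty (f : Pt -> R) ivs1 c ivs2 : lsum f (box (ivs1 ++ (c, 0%nat) :: ivs2)) = 0.
Proof.
  revert f; induction ivs1 as [|[c' n'] ivs1 IH]; intros f; [reflexivity|].
  simpl app. rewrite lsum_box_cons, (lsum_ext_in _ _ (fun _ => 0)), lsum_const; [lra|].
  intros; apply IH.
Qed.

Lemma prod_le_pow (ns : list nat) M : Forall (fun n => n <= M)%nat ns ->
  (fold_right Nat.mul 1 ns <= M ^ length ns)%nat.
Proof. induction 1; simpl; [lia|]. apply Nat.mul_le_mono; auto. Qed.

Lemma length_box_slab_le ivs1 c n ivs2 M :
  Forall (fun cn => snd cn <= M)%nat (ivs1 ++ ivs2) ->
  (length (box (ivs1 ++ (c, n) :: ivs2)) <= n * M ^ (length ivs1 + length ivs2))%nat.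
Proof.
  intros HM. apply Forall_app in HM as [HM1 HM2].
  pose proof (prod_le_pow (map snd ivs1) M (proj2 (Forall_map _ _ _) HM1)) as H1.
  pose proof (prod_le_pow (map snd ivs2) M (proj2 (Forall_map _ _ _) HM2)) as H2.
  rewrite !length_map in H1, H2.
  rewrite length_box, map_app, fold_right_app, Nat.pow_add_r. simpl.
  assert (Hfold : forall ks a, fold_right Nat.mul a ks = (fold_right Nat.mul 1 ks * a)%nat)
    by (intros ks a; induction ks; simpl; [lia | rewrite IHks; lia]).
  rewrite Hfold, Nat.mul_assoc, (Nat.mul_comm _ n), <- Nat.mul_assoc.
  apply Nat.mul_le_mono_l, Nat.mul_le_mono; assumption.
Qed.

Lemma norminf_nonneg x : (0 <= norminf x)%Z.
Proof. induction x; simpl; lia. Qed.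

Lemma norminf_le_iff x n :
  (norminf x <= n)%Z <-> (0 <= n)%Z /\ Forall (fun z => Z.abs z <= n)%Z x.
Proof.
  induction x as [|a x IH]; simpl; [split; [split; auto; lia | lia]|].
  rewrite Forall_cons_iff. pose proof (norminf_nonneg x). split.
  - intros Hn. assert (Hx : (norminf x <= n)%Z) by lia. apply IH in Hx. intuition lia.
  - intros (H0 & H1 & H2). assert ((norminf x <= n)%Z) by (apply IH; auto). lia.
Qed.

Lemma norminf_attained x : x <> [] -> exists z, In z x /\ norminf x = Z.abs z.
Proof.
  induction x as [|a x IH]; intros H; [congruence|]. destruct x as [|b x].
  - exists a. simpl. split; auto. lia.
  - destruct (IH ltac:(discriminate)) as [z [Hz E]]. simpl norminf in *.
    destruct (Z.le_ge_cases (Z.abs a) (Z.max (Z.abs b) (norminf x))).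
    + exists z. split; [right; auto | lia].
    + exists a. split; [left; auto | lia].
Qed.

Lemma norminf_sub_triangle j i : length j = length i ->
  (norminf j <= norminf (vsub j i) + norminf i)%Z.
Proof.
  revert i; induction j as [|a j IH]; intros [|b i] Hl; simpl in *; try lia.
  pose proof (IH i ltac:(lia)). unfold vsub in *. simpl.
  pose proof (norminf_nonneg i).
  pose proof (norminf_nonneg (map (fun p : Z * Z => (fst p - snd p)%Z) (combine j i))). lia.
Qed.

Lemma In_cube x d l : In x (cube d l) <-> length x = d /\ (norminf x <= Z.of_nat l)%Z.
Proof.
  rewrite cube_box, In_box, norminf_le_iff. split.
  - intros H. pose proof (Forall2_length H) as Hl. rewrite repeat_length in Hl.
    split; [auto | split; [lia|]]. clear Hl. revert d H. induction x as [|z x IHx]; intros [|d] H;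
      inversion H; subst; constructor; eauto.
    apply In_zinterval in H3. simpl in H3. lia.
  - intros [<- [_ H]]. induction H; simpl; constructor; auto. apply In_zinterval. simpl. lia.
Qed.

Lemma NoDup_cube d l : NoDup (cube d l).
Proof. rewrite cube_box. apply NoDup_box. Qed.

Lemma box_tau_fund_domain d tau cs : (1 <= tau)%nat -> length cs = d ->
  fund_domain d tau (box (map (fun c => (c, tau)) cs)).
Proof.
  intros Htau <-. split; [|split].
  - apply NoDup_box.
  - apply Forall_forall. intros x Hx. apply length_In_box in Hx.
    unfold is_pt. rewrite Hx, length_map. reflexivity.
  - intros x Hx. unfold is_pt in Hx. revert x Hx.
    induction cs as [|c cs IH]; intros x Hx.
    + destruct x; [|discriminate]. exists []. split; [split; [left; auto | constructor]|].
      intros y [[<-|[]] _]. reflexivity.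
    + destruct x as [|a x]; [discriminate|]. injection Hx as Hx.
      destruct (IH x Hx) as [y [[Hy Hc] Huniq]].
      set (T := Z.of_nat tau). assert (HT : (0 < T)%Z) by (unfold T; lia).
      pose proof (Z.mod_pos_bound (a - c) T HT). pose proof (Z.div_mod (a - c) T ltac:(lia)).
      exists ((c + (a - c) mod T)%Z :: y). split.
      * split.
        -- simpl. apply in_flat_map. exists (c + (a - c) mod T)%Z.
           split; [apply In_zinterval; lia | apply in_map, Hy].
        -- constructor; auto. exists ((a - c) / T)%Z. lia.
      * intros y' [Hy' Hc']. apply In_box in Hy'. inversion Hy' as [|z c' y'' cs' Hz Hy'']; subst.
        inversion Hc' as [|? ? ? ? [k Hk] Hc'']; subst.
        rewrite <- (Huniq y''); [|split; auto; apply In_box; auto].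
        apply In_zinterval in Hz. simpl in Hz. f_equal.
        assert (k = (a - c) / T)%Z by nia. subst k. lia.
Qed.

Section FieldTerm.

Variables (d : nat) (mu : R) (tau : nat) (h : Pt -> R).
Hypothesis tau_pos : (1 <= tau)%nat.
Hypothesis h_bounded : forall i, is_pt d i -> Rabs (h i) <= mu.
Hypothesis h_mean_zero : forall F, fund_domain d tau F -> lsum h F = 0.

(* Peel off one period at a time; a product of single periods is a fundamental domain. *)
Lemma lsum_h_box_tau_multiples ivs :
  length ivs = d -> Forall (fun cn => Nat.divide tau (snd cn)) ivs -> lsum h (box ivs) = 0.
Proof.
  intros Hlen Hdiv. change ivs with (map (fun c => (c, tau)) [] ++ ivs).
  change (length (@nil Z) + length ivs = d)%nat in Hlen.
  revert Hlen. generalize (@nil Z) as cs.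
  induction Hdiv as [|[c n] ivs [q Hq] Hdiv IH]; intros cs Hlen.
  - rewrite app_nil_r. apply h_mean_zero, box_tau_fund_domain; auto.
    simpl in Hlen; lia.
  - simpl in Hq, Hlen |- *. subst n. revert c. induction q as [|q IHq]; intros c.
    + apply lsum_box_empty.
    + replace (S q * tau)%nat with (tau + q * tau)%nat by lia.
      rewrite lsum_box_split, IHq.
      replace (map (fun c => (c, tau)) cs ++ (c, tau) :: ivs) with (map (fun c => (c, tau)) (cs ++ [c]) ++ ivs)
        by (rewrite map_app, <- app_assoc; reflexivity).
      rewrite IH; [lra|]. rewrite length_app in *. simpl in *. lia.
Qed.

Lemma mu_nonneg : 0 <= mu.
Proof.
  pose proof (h_bounded (repeat 0%Z d) (repeat_length _ _)).
  pose proof (Rabs_pos (h (repeat 0%Z d))). lra.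
Qed.

(* Cut each free interval into whole periods plus a remainder slab of width < tau:
   the periods are absorbed into [As], the slab has at most [tau * M ^ (d - 1)] points. *)
Lemma Rabs_lsum_h_box M Ls As :
  (length As + length Ls)%nat = d -> Forall (fun cn => Nat.divide tau (snd cn)) As ->
  Forall (fun cn => snd cn <= M)%nat (As ++ Ls) ->
  Rabs (lsum h (box (As ++ Ls))) <= INR (length Ls) * (mu * INR tau * INR M ^ (d - 1)).
Proof.
  revert As. induction Ls as [|[c n] Ls IH]; intros As Hlen Hdiv HM.
  - rewrite app_nil_r, lsum_h_box_tau_multiples, Rabs_R0; [simpl; lra | simpl in Hlen; lia | exact Hdiv].
  - pose proof (Nat.mod_upper_bound n tau ltac:(lia)) as Hmod.
    pose proof (Nat.div_mod_eq n tau) as Hdivmod.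
    apply Forall_app in HM as [HMA HML]. apply Forall_cons_iff in HML as [Hn HML]. simpl in Hn.
    rewrite (Nat.div_mod_eq n tau), (Nat.mul_comm tau), lsum_box_split.
    replace (As ++ (c, n / tau * tau)%nat :: Ls) with ((As ++ [(c, n / tau * tau)%nat]) ++ Ls)
      by (rewrite <- app_assoc; reflexivity).
    eapply Rle_trans; [apply Rabs_triang|]. simpl length. rewrite S_INR, Rmult_plus_distr_r, Rmult_1_l.
    apply Rplus_le_compat.
    + apply IH.
      * rewrite length_app. simpl in *. lia.
      * apply Forall_app. split; auto. constructor; [apply Nat.divide_factor_r | constructor].
      * rewrite <- app_assoc. apply Forall_app. split; auto. constructor; auto. simpl. nia.
    + eapply Rle_trans.
      * apply Rabs_lsum_le with (M := mu). intros x Hx. apply h_bounded.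
        unfold is_pt. rewrite (length_In_box _ _ Hx), length_app. simpl in *. lia.
      * rewrite Rmult_comm, Rmult_assoc. apply Rmult_le_compat_l; [apply mu_nonneg|].
        rewrite <- pow_INR, <- mult_INR. apply le_INR.
        eapply Nat.le_trans; [apply (length_box_slab_le _ _ _ _ M), Forall_app; auto|].
        replace (length As + length Ls)%nat with (d - 1)%nat by (simpl in Hlen; lia). nia.
Qed.

Lemma Rabs_lsum_h_cube l : Rabs (lsum h (cube d l)) <= INR d * (mu * INR tau * INR (2 * l + 1) ^ (d - 1)).
Proof.
  rewrite cube_box. rewrite <- (repeat_length ((- Z.of_nat l)%Z, (2 * l + 1)%nat) d) at 2.
  apply (Rabs_lsum_h_box _ _ []); [rewrite repeat_length; reflexivity | constructor |].
  apply Forall_forall. intros x Hx. apply repeat_spec in Hx. subst. simpl. lia.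
Qed.

End FieldTerm.

Lemma lsum_box_coords (sf : Z -> R) c n d :
  lsum (fun x => lsum sf x) (box (repeat (c, n) d)) = INR d * INR n ^ (d - 1) * lsum sf (zinterval c n).
Proof.
  induction d as [|d IH]; [simpl; lra|]. simpl repeat. rewrite lsum_box_cons.
  rewrite (lsum_ext_in _ _ (fun z => INR (length (box (repeat (c, n) d))) * sf z +
                                     lsum (fun x => lsum sf x) (box (repeat (c, n) d)))).
  2: { intros z _. simpl. rewrite lsum_plus, lsum_const. reflexivity. }
  rewrite lsum_plus, lsum_scal, lsum_const, IH, length_box, length_zinterval.
  replace (fold_right Nat.mul 1%nat (map snd (repeat (c, n) d))) with (n ^ d)%nat
    by (clear; induction d; simpl; auto).
  rewrite pow_INR. destruct d as [|d]; [simpl; lra|].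
  replace (S (S d) - 1)%nat with (S d) by lia. replace (S d - 1)%nat with d by lia.
  rewrite !S_INR. simpl. lra.
Qed.

(* On [-l, 0] the summand runs through s 1, ..., s (l + 1), on [1, l] through s l, ..., s 1. *)
Lemma lsum_tent_le (s : nat -> R) l : (forall m, 0 <= s m) ->
  lsum (fun z => s (Z.to_nat (Z.of_nat l + 1 - Z.abs z))) (zinterval (- Z.of_nat l) (2 * l + 1))
  <= 2 * sum_f_R0 (fun k => s (S k)) l.
Proof.
  intros Hs. replace (2 * l + 1)%nat with (S l + l)%nat by lia.
  rewrite zinterval_add, lsum_app, sum_f_R0_lsum. unfold zinterval. rewrite !lsum_map.
  assert (Hleft : lsum (fun k => s (Z.to_nat (Z.of_nat l + 1 - Z.abs (- Z.of_nat l + Z.of_nat k))))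
                    (seq 0 (S l)) = lsum (fun k => s (S k)) (seq 0 (S l))).
  { apply lsum_ext_in. intros k Hk. apply in_seq in Hk. f_equal. lia. }
  assert (Hright : lsum (fun k => s (Z.to_nat (Z.of_nat l + 1 -
                       Z.abs (- Z.of_nat l + Z.of_nat (S l) + Z.of_nat k)))) (seq 0 l)
                   <= lsum (fun k => s (S k)) (seq 0 (S l))).
  { rewrite (lsum_ext_in _ _ (fun k => s (S (l - 1 - k)%nat))), (lsum_seq_rev (fun k => s (S k))).
    - rewrite seq_S, lsum_app. simpl. pose proof (Hs (S l)). lra.
    - intros k Hk. apply in_seq in Hk. f_equal. lia. }
  lra.
Qed.

Definition outflow (J : Pt -> Pt -> R) (l : nat) (p : Pt * Pt) : R :=
  if Z.leb (norminf (fst p)) (Z.of_nat l) && negb (Z.leb (norminf (snd p)) (Z.of_nat l))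
  then 2 * J (fst p) (snd p) else 0.

(* Every [j] outside [Q_l] satisfies [|j - i|_inf >= exit_depth l i]. *)
Definition exit_depth (l : nat) (i : Pt) : nat := Z.to_nat (Z.of_nat l + 1 - norminf i).

Lemma pair_energy_outflow (J : Pt -> Pt -> R) l a b : J a b = J b a ->
  J a b * (1 - psi l a * psi l b) = outflow J l (a, b) + outflow J l (b, a).
Proof.
  intros Hsym. unfold outflow, psi. simpl. rewrite Hsym.
  destruct (Z.leb (norminf a) (Z.of_nat l)), (Z.leb (norminf b) (Z.of_nat l)); simpl; lra.
Qed.

Section Interaction.

Variables (d : nat) (lam Lam : R) (J : Pt -> Pt -> R).
Hypothesis HJ : J_cond d lam Lam J.
Hypothesis Lam_nonneg : 0 <= Lam.

Lemma lsum_J_le_sigmaJ i m K : is_pt d i -> NoDup K ->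
  Forall (fun j => is_pt d j /\ (Z.of_nat m <= norminf (vsub j i))%Z) K ->
  lsum (J i) K <= sigmaJ d J m.
Proof.
  destruct HJ as (_ & _ & _ & _ & HJ4).
  assert (Hpartial : forall i' P x, is_pt d i' ->
            (exists K', NoDup K' /\ Forall (fun j => is_pt d j /\ P j) K' /\ x = lsum (J i') K') ->
            x <= Lam).
  { intros i' P x Hi' [K' (HK' & HF & ->)].
    apply HJ4; auto. eapply Forall_impl; [|exact HF]. intros a []; auto. }
  intros Hi HK HF.
  apply Rle_trans with (nnsum (fun j => is_pt d j /\ (Z.of_nat m <= norminf (vsub j i))%Z) (J i)).
  - apply sup_R_ub; [exists Lam; intros x; apply Hpartial; auto | exists K; auto].
  - apply sup_R_ub; [|exists i; auto].
    exists Lam. intros x [i' [Hi' ->]]. apply sup_R_least; auto. intros x. apply Hpartial; auto.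
Qed.

Lemma sigmaJ_nonneg m : 0 <= sigmaJ d J m.
Proof.
  apply (lsum_J_le_sigmaJ (repeat 0%Z d) m []); [apply repeat_length | constructor | constructor].
Qed.

Lemma lsum_outflow_le l L : NoDup L -> Forall (fun p => is_pt d (fst p) /\ is_pt d (snd p)) L ->
  lsum (outflow J l) L <= 2 * lsum (fun i => sigmaJ d J (exit_depth l i)) (cube d l).
Proof.
  intros HN HF. rewrite Forall_forall in HF.
  set (eqPt := list_eq_dec Z.eq_dec).
  rewrite (lsum_fibers eqPt _ (cube d l)); [|apply NoDup_cube|].
  2: { intros [a b] Hp Hn. unfold outflow. simpl in *.
       destruct (Z.leb_spec (norminf a) (Z.of_nat l)); [|reflexivity].
       exfalso. apply Hn, In_cube. split; [apply (HF _ Hp) | assumption]. }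
  rewrite <- lsum_scal. apply lsum_le_in. intros i Hi. apply In_cube in Hi as [Hi Hil].
  set (Li := filter (fun p => if eqPt (fst p) i then true else false) L).
  assert (Hfst : forall p, In p Li -> fst p = i).
  { intros p Hp. apply filter_In in Hp as [_ Hp]. destruct (eqPt (fst p) i); congruence. }
  assert (HLi : forall p, In p Li -> In p L) by (intros p Hp; apply filter_In in Hp; tauto).
  set (K := filter (fun j => negb (Z.leb (norminf j) (Z.of_nat l))) (map snd Li)).
  transitivity (2 * lsum (J i) K).
  - apply Req_le. unfold K. rewrite lsum_filter, lsum_map, <- lsum_scal.
    apply lsum_ext_in. intros [a b] Hp. unfold outflow. simpl.
    pose proof (Hfst _ Hp) as Ha. simpl in Ha. subst a. rewrite (proj2 (Z.leb_le _ _) Hil).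
    destruct (Z.leb (norminf b) (Z.of_nat l)); simpl; lra.
  - apply Rmult_le_compat_l; [lra|]. apply lsum_J_le_sigmaJ; auto.
    + apply NoDup_filter, NoDup_map_NoDup_ForallPairs; [|apply NoDup_filter; auto].
      intros x y Hx Hy E. apply injective_projections; auto. rewrite (Hfst x Hx), (Hfst y Hy). reflexivity.
    + apply Forall_forall. intros j Hj. apply filter_In in Hj as [Hj Hout].
      apply in_map_iff in Hj as [p [<- Hp]]. destruct (HF p (HLi p Hp)) as [_ Hp2].
      split; auto. apply Bool.negb_true_iff, Z.leb_gt in Hout.
      pose proof (norminf_sub_triangle (snd p) i ltac:(unfold Pt, is_pt in *; lia)).
      unfold exit_depth. rewrite Z2Nat.id by lia. lia.
Qed.

Lemma interaction_energy_le l :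
  nnsum (fun p : Pt * Pt => is_pt d (fst p) /\ is_pt d (snd p) /\
                             (In (fst p) (cube d l) \/ In (snd p) (cube d l)))
        (fun p => J (fst p) (snd p) * (1 - psi l (fst p) * psi l (snd p)))
  <= 4 * lsum (fun i => sigmaJ d J (exit_depth l i)) (cube d l).
Proof.
  apply sup_R_least.
  - apply Rmult_le_pos; [lra|]. apply lsum_nonneg. intros; apply sigmaJ_nonneg.
  - intros x [L (HN & HF & ->)].
    assert (HF' : Forall (fun p => is_pt d (fst p) /\ is_pt d (snd p)) L)
      by (eapply Forall_impl; [|exact HF]; simpl; tauto).
    rewrite (lsum_ext_in _ _ (fun p => outflow J l p + outflow J l (snd p, fst p))).
    2: { intros [a b] Hp. rewrite Forall_forall in HF'. destruct (HF' _ Hp) as [Ha Hb].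
         apply pair_energy_outflow. destruct HJ as (_ & HJ1 & _). apply HJ1; auto. }
    rewrite lsum_plus, <- (lsum_map (outflow J l) (fun p => (snd p, fst p))).
    pose proof (lsum_outflow_le l L HN HF').
    assert (lsum (outflow J l) (map (fun p => (snd p, fst p)) L)
            <= 2 * lsum (fun i => sigmaJ d J (exit_depth l i)) (cube d l)).
    { apply lsum_outflow_le.
      - apply NoDup_map_NoDup_ForallPairs; auto. intros [] [] _ _ E. simpl in E. congruence.
      - apply Forall_map. eapply Forall_impl; [|exact HF']. simpl; tauto. }
    lra.
Qed.

Lemma lsum_sigmaJ_exit_depth_le l : (1 <= d)%nat ->
  lsum (fun i => sigmaJ d J (exit_depth l i)) (cube d l)
  <= INR d * INR (2 * l + 1) ^ (d - 1) * (2 * sum_f_R0 (fun k => sigmaJ d J (S k)) l).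
Proof.
  intros Hd. set (sf := fun z => sigmaJ d J (Z.to_nat (Z.of_nat l + 1 - Z.abs z))).
  transitivity (lsum (fun x => lsum sf x) (cube d l)).
  - apply lsum_le_in. intros i Hi. apply In_cube in Hi as [Hi _].
    destruct (norminf_attained i) as [z [Hz E]]; [intros ->; simpl in Hi; lia|].
    unfold exit_depth. rewrite E. apply (lsum_elem_le _ sf i z); auto.
    intros; apply sigmaJ_nonneg.
  - rewrite cube_box, lsum_box_coords. apply Rmult_le_compat_l.
    + apply Rmult_le_pos; [apply pos_INR | apply pow_le, pos_INR].
    + apply lsum_tent_le. intros; apply sigmaJ_nonneg.
Qed.

End Interaction.

Lemma field_energy_cube_le d mu tau h l : (1 <= tau)%nat -> h_cond d mu tau h ->
  lsum (fun i => h i * psi l i) (cube d l) <= INR d * (mu * INR tau * INR (2 * l + 1) ^ (d - 1)).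
Proof.
  intros Htau [Hbnd Hmean].
  rewrite (lsum_ext_in _ _ (fun i => -1 * h i)), lsum_scal.
  - pose proof (Rabs_lsum_h_cube d mu tau h Htau Hbnd Hmean l).
    pose proof (Rle_abs (- lsum h (cube d l))). rewrite Rabs_Ropp in *. lra.
  - intros i Hi. apply In_cube in Hi as [_ Hi]. unfold psi.
    rewrite (proj2 (Z.leb_le _ _) Hi). lra.
Qed.

Lemma cube_side_pow_le l k : (1 <= l)%nat -> INR (2 * l + 1) ^ k <= 3 ^ k * INR l ^ k.
Proof.
  intros Hl. rewrite <- Rpow_mult_distr. apply pow_incr. split; [apply pos_INR|].
  replace 3 with (INR 3) by (simpl; lra). rewrite <- mult_INR. apply le_INR. lia.
Qed.

Theorem mainTheorem7 :
  forall (d : nat) (mu : R) (tau : nat),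
    (2 <= d)%nat -> 0 < mu -> (1 <= tau)%nat ->
    exists C : R, 1 <= C /\
      forall (lam Lam : R) (J : Pt -> Pt -> R) (h : Pt -> R),
        0 < lam -> lam <= Lam ->
        J_cond d lam Lam J -> h_cond d mu tau h ->
        forall l : nat, (1 <= l)%nat ->
          Ham d J h (cube d l) (psi l)
            <= C * INR l ^ (d - 1)%nat * (1 + sum_f_R0 (fun k => sigmaJ d J (S k)) l).
Proof.
  intros d mu tau Hd Hmu Htau.
  assert (Hd' : 2 <= INR d) by (replace 2 with (INR 2) by (simpl; lra); apply le_INR; auto).
  assert (Htau' : 1 <= INR tau) by (replace 1 with (INR 1) by (simpl; lra); apply le_INR; auto).
  assert (H3 : 1 <= 3 ^ (d - 1)) by (apply pow_R1_Rle; lra).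
  assert (Hmt : 0 <= mu * INR tau) by (apply Rmult_le_pos; lra).
  exists (3 ^ (d - 1) * INR d * (8 + mu * INR tau)). split.
  { assert (1 <= INR d * (8 + mu * INR tau)) by nra. nra. }
  intros lam Lam J h Hlam HlamLam HJ Hh l Hl. unfold Ham.
  pose proof (interaction_energy_le d lam Lam J HJ ltac:(lra) l) as Hinter.
  pose proof (lsum_sigmaJ_exit_depth_le d lam Lam J HJ ltac:(lra) l ltac:(lia)) as Hsigma.
  pose proof (field_energy_cube_le d mu tau h l Htau Hh) as Hfield.
  pose proof (cube_side_pow_le l (d - 1) Hl) as Hside.
  set (Sg := sum_f_R0 (fun k => sigmaJ d J (S k)) l) in *.
  set (P := INR (2 * l + 1) ^ (d - 1)) in *.
  assert (HSg : 0 <= Sg).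
  { unfold Sg. rewrite sum_f_R0_lsum. apply lsum_nonneg. intros; eapply sigmaJ_nonneg; eauto; lra. }
  assert (HdP : 0 <= INR d * P) by (apply Rmult_le_pos; [lra | apply pow_le, pos_INR]).
  assert (0 <= INR d * P * (8 + mu * INR tau * Sg))
    by (apply Rmult_le_pos; [lra | apply Rplus_le_le_0_compat; [lra | apply Rmult_le_pos; lra]]).
  apply Rle_trans with (INR d * P * ((8 + mu * INR tau) * (1 + Sg))); [lra|].
  replace (3 ^ (d - 1) * INR d * (8 + mu * INR tau) * INR l ^ (d - 1) * (1 + Sg))
    with (INR d * (3 ^ (d - 1) * INR l ^ (d - 1)) * ((8 + mu * INR tau) * (1 + Sg))) by ring.
  apply Rmult_le_compat_r; [nra|]. apply Rmult_le_compat_l; lra.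
Qed.
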